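(* Let $n\ge2$, $\kappa\ge1$ with $n>\kappa+1$, and let $G\in\mathcal G_{[n;\kappa]}$ be skew-symmetric. Then $c_i(x)=0$ for every profile $x\in\{1,\dots,\kappa\}^n$ and every $i=1,\dots,n$.
   Context: A finite game $G\in\mathcal G_{[n;\kappa]}$ has players $\{1,\dots,n\}$, each with strategy set $\{1,\dots,\kappa\}$, and payoff functions $c_i:\{1,\dots,\kappa\}^n\to\mathbb R$. $G$ is skew-symmetric if for every permutation $\sigma\in\mathbf S_n$, every $i$ and every profile, $c_i(x_1,\dots,x_n)=\mathrm{sgn}(\sigma)\,c_{\sigma(i)}(x_{\sigma^{-1}(1)},\dots,x_{\sigma^{-1}(n)})$. *)

From mathcomp Require Import all_boot all_order all_algebra all_fingroup.
From mathcomp Require Import all_reals.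
Set Implicit Arguments. Unset Strict Implicit. Unset Printing Implicit Defensive.
Import GRing.Theory Num.Theory.
Local Open Scope ring_scope.

(* A finite game in G_[n;kappa]: players 'I_n (= {1..n} shifted to 0-based),
   strategies 'I_kappa, profiles {ffun 'I_n -> 'I_kappa}, and payoff
   functions c i : profile -> R (R a real number type). *)
Definition profile (n kappa : nat) := {ffun 'I_n -> 'I_kappa}.
Definition game (R : Type) (n kappa : nat) := 'I_n -> profile n kappa -> R.

Definition perm_profile n kappa (s : 'S_n) (x : profile n kappa) : profile n kappa :=
  [ffun j => x (s^-1%g j)].

Definition sgn (R : pzRingType) n (s : 'S_n) : R := (-1) ^+ odd_perm s.

Definition skew_symmetric (R : pzRingType) n kappa (c : game R n kappa) : Prop :=
  forall (s : 'S_n) (i : 'I_n) (x : profile n kappa),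
    c i x = sgn R s * c (s i) (perm_profile s x).

From mathcomp Require Import all_boot all_order all_algebra all_fingroup.
From mathcomp Require Import all_reals.

Set Implicit Arguments.
Unset Strict Implicit.
Unset Printing Implicit Defensive.
Import GRing.Theory Num.Theory.
Local Open Scope ring_scope.

(* Among the n - 1 > kappa opponents of player i, two players j, k must use the
   same strategy. The transposition (j k) then fixes both i and the profile, so
   skew-symmetry gives c_i(x) = sgn(j k) c_i(x) = - c_i(x), whence c_i(x) = 0. *)

Lemma exists_collision_in (T T' : finType) (f : T -> T') (A : {pred T}) :
  (#|T'| < #|A|)%N ->
  exists j, exists k, [/\ j \in A, k \in A, j != k & f j = f k].
Proof.
move=> ltT'A.
have [/existsP[j /existsP[k /and4P[jA kA neq_jk /eqP fjk]]]
      |/existsPn no_collision] := boolP [exists j, exists k, [&& j \in A, k \in A, j != k & f j == f k]].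
  by exists j, k.
suff : (#|A| <= #|T'|)%N by rewrite leqNgt ltT'A.
apply: (leq_card_in f) => j k jA kA fjk; apply/eqP/negPn/negP => neq_jk.
by have /existsPn/(_ k) := no_collision j; rewrite jA kA neq_jk fjk eqxx.
Qed.

Lemma perm_profile_tperm n kappa (x : profile n kappa) (j k : 'I_n) :
  x j = x k -> perm_profile (tperm j k) x = x.
Proof.
move=> xjk; apply/ffunP => l; rewrite ffunE tpermV.
by case: tpermP => // ->.
Qed.

Lemma eq_oppr_eq0 (R : numDomainType) (a : R) : a = - a -> a = 0.
Proof.
move/eqP; rewrite -addr_eq0 -mulr2n mulrn_eq0 /=.
by move/eqP.
Qed.

Lemma skew_symmetric_eq0_collision (R : numDomainType) n kappa
    (c : game R n kappa) (x : profile n kappa) (i j k : 'I_n) :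
  skew_symmetric c -> j != k -> j != i -> k != i -> x j = x k -> c i x = 0.
Proof.
move=> skew_c neq_jk neq_ji neq_ki xjk; apply: eq_oppr_eq0.
have tperm_fixes_i : tperm j k i = i by rewrite tpermD // eq_sym.
rewrite {1}(skew_c (tperm j k)) tperm_fixes_i perm_profile_tperm //.
by rewrite /sgn odd_tperm neq_jk mulN1r.
Qed.

Theorem proposition4p1 (R : realType) (n kappa : nat) (c : game R n kappa) :
  (2 <= n)%N -> (1 <= kappa)%N -> (kappa.+1 < n)%N ->
  skew_symmetric c ->
  forall (x : profile n kappa) (i : 'I_n), c i x = 0.
Proof.
move=> _ _ lt_kappa_n skew_c x i.
have lt_kappa_opponents : (#|'I_kappa| < #|[set~ i]|)%N.
  by rewrite cardsC1 !card_ord -ltnS (ltn_predK lt_kappa_n).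
have [j [k [jA kA neq_jk xjk]]] :=
  exists_collision_in (fun j => x j) lt_kappa_opponents.
move: jA kA; rewrite !in_setC1 => neq_ji neq_ki.
exact: skew_symmetric_eq0_collision skew_c neq_jk neq_ji neq_ki xjk.
Qed.
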